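(* Let $\{M_p\mid p\in P\}$ be a Morse decomposition of a multivector field on a finite simplicial complex $K$, with associated $P$-filtered chain complex $(C,d)$, and let $f:K\to\mathbb R$ be Lyapunov for this Morse decomposition. Let $P_f$ and $P'_f$ be two $f$-compatible orders of $P$, and let $(\bar C,\bar d)$ and $(\bar C',\bar d')$ be Conley complexes of $(C,d)$. Then $\mathrm{pers}(H(\bar{\mathbf C},P_f))=\mathrm{pers}(H(\mathbf F,P_f))=\mathrm{pers}(H(\mathbf F',P'_f))=\mathrm{pers}(H(\bar{\mathbf C}',P'_f))$.
   Context: $K$ is a finite simplicial complex; a multivector field $\mathcal V$ on $K$ is a partition of $K$ into convex sets $V$ (if $\sigma,\tau\in V$ and $\sigma\le\mu\le\tau$ in the face order then $\mu\in V$); $F_{\mathcal V}(\sigma)=[\sigma]_{\mathcal V}\cup\{\tau:\tau\le\sigma\}$ where $[\sigma]_{\mathcal V}$ is the part containing $\sigma$; a path is a sequence $\sigma_1,\dots,\sigma_r$ with $\sigma_k\in F_{\mathcal V}(\sigma_{k-1})$. A Morse decomposition indexed by a finite poset $(P,\le_P)$ is a partition $K=\bigsqcup_{p\in P}M_p$ such that every path from $M_p$ to $M_q$ has $q\le_P p$. Let $m=|P|$. $(C,d)$: $C_p$ is the $\mathbb Z_2$-span of the simplices in $M_p$ (graded by dimension), $C=\bigoplus_pC_p$ the simplicial chains of $K$ over $\mathbb Z_2$, $d$ the simplicial boundary. For $P$-graded spaces and a linear map $h$, $h_{pq}=\pi_p h\iota_q$, and $h$ is $P$-filtered if $h_{pq}\ne0\Rightarrow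 p\le_P q$. A $P$-filtered chain complex is a $\mathbb Z_2$ chain complex with a $P$-gradation (compatible with degree) whose differential is $P$-filtered. Filtered chain maps are $P$-filtered chain maps; filtered chain maps $\varphi,\psi$ are filtered chain homotopic if $\psi-\varphi=d'S+Sd$ for some $P$-filtered degree-raising-by-one linear $S$; two $P$-filtered complexes are filtered chain homotopic if there are filtered chain maps $\varphi,\varphi'$ between them with $\varphi'\varphi$ and $\varphi\varphi'$ filtered chain homotopic to the identities. A Conley complex of $(C,d)$ is a $P$-filtered chain complex $(\bar C,\bar d)$ filtered chain homotopic to $(C,d)$ with $\bar d_{pp}=0$ for all $p$. $f:K\to\mathbb R$ is Lyapunov (for the Morse decomposition) if $f$ is constant on each $M_p$, with value denoted $f(p)$, and $p\le_P q$ implies $f(p)\le f(q)$. An $f$-compatible order $P_f$ is an enumeration $p_1,\dots,p_m$ of $P$ that is a linear extension of $\le_P$ with $f(p_1)\le\dots\le f(p_m)$. For a $P$-filtered chain complex $(D,\delta)$, set $\mathbf D_{p_i}=\bigoplus_{j\le i}D_{p_j}$ (a subcomplex) and let $H(\mathbf D,P_f)$ be the persistence module $H_*(\mathbf D_{p_1})\to\dots\to H_*(\mathbf D_{p_m})$ with inclusion-induced maps. $K_i=\bigsqcup_{j\le i}M_{p_j}$ is a subcomplex of $K$ and $H(\mathbf F,P_f)$ is $H_*(C(K_1))\to\dots\to H_*(C(K_m))$ with inclusion-induced maps, $C(K_i)$ the simplicial chains of $K_i$ over $\mathbb Z_2$; $\mathbf F'$, $\bar{\mathbf C}'$ denote the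 same constructions for $P'_f$ and $(\bar C',\bar d')$. For such a module $V_1\to\dots\to V_m$ indexed by $P_f$, $\mathrm{pers}$ is the persistence diagram: decompose each homological degree into interval modules $[a,b]$, $1\le a\le b\le m$, and record for each the point $(f(p_a),f(p_{b+1}))$ with $f(p_{m+1}):=+\infty$, discarding points with $f(p_a)=f(p_{b+1})$; the result is a multiset of points per degree. *)

From HB Require Import structures.
From mathcomp Require Import all_boot all_order all_algebra.
From mathcomp Require Import reals.

Set Implicit Arguments.
Unset Strict Implicit.
Unset Printing Implicit Defensive.

Import Order.TTheory GRing.Theory Num.Theory.
Local Open Scope ring_scope.

(* A simplex is a nonempty finite set of vertices; dim sigma = #|sigma|-1.  *)

Definition simplicial_complex (V : finType) (K : {set {set V}}) : Prop :=
  set0 \notin K /\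
  forall s t : {set V}, s \in K -> t != set0 -> t \subset s -> t \in K.

Definition convex_in (V : finType) (K A : {set {set V}}) : Prop :=
  forall s t m : {set V}, s \in A -> t \in A -> m \in K ->
    s \subset m -> m \subset t -> m \in A.

Definition multivector_field (V : finType) (K : {set {set V}})
    (mv : {set {set {set V}}}) : Prop :=
  partition mv K /\ forall A, A \in mv -> convex_in K A.

Definition Fmv (V : finType) (K : {set {set V}}) (mv : {set {set {set V}}})
    (s : {set V}) : {set {set V}} :=
  pblock mv s :|: [set t in K | t \subset s].

Definition mv_path (V : finType) (K : {set {set V}}) (mv : {set {set {set V}}})
    (x : {set V}) (s : seq {set V}) : bool :=
  (x \in K) && path (fun a b => b \in Fmv K mv a) x s.

Definition morse_decomposition (V : finType) (K : {set {set V}})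
    (mv : {set {set {set V}}}) (d : Order.disp_t) (P : finPOrderType d)
    (M : P -> {set {set V}}) : Prop :=
  [/\ forall p, M p \subset K,
      forall p, M p != set0,
      forall p q, p != q -> [disjoint M p & M q],
      forall s, s \in K -> exists p, s \in M p &
      forall (p q : P) (x : {set V}) (s : seq {set V}),
        mv_path K mv x s -> x \in M p -> last x s \in M q -> (q <= p)%O].

(* P-filtered chain complexes over Z_2, in a chosen homogeneous basis.      *)
(* Chains are row vectors 'rV['F_2]_n; basis element i has P-grade gr i and *)
(* homological degree dg i.  dm i j = coefficient of e_j in d(e_i), so the  *)
(* differential is v |-> v *m dm.                                           *)

Record fcomplex (d : Order.disp_t) (P : finPOrderType d) := FComplex {
  fc_n : nat;
  fc_gr : 'I_fc_n -> P;
  fc_dg : 'I_fc_n -> nat;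
  fc_d : 'M['F_2]_fc_n
}.
Arguments FComplex {d P} fc_n fc_gr fc_dg fc_d.
Arguments fc_n {d P} f : rename.
Arguments fc_gr {d P} f _ : rename.
Arguments fc_dg {d P} f _ : rename.
Arguments fc_d {d P} f : rename.

Definition fcomplex_wf d (P : finPOrderType d) (D : fcomplex P) : Prop :=
  [/\ forall i j, fc_d D i j != 0 -> fc_dg D i = (fc_dg D j).+1,
      forall i j, fc_d D i j != 0 -> (fc_gr D j <= fc_gr D i)%O &
      fc_d D *m fc_d D = 0].

(* A P-filtered linear map D1 -> D2 (matrix, row convention) raising degree
   by r (r = 0 for chain maps, r = 1 for homotopies). *)
Definition filtered_map d (P : finPOrderType d) (D1 D2 : fcomplex P) (r : nat)
    (A : 'M['F_2]_(fc_n D1, fc_n D2)) : Prop :=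
  forall i j, A i j != 0 ->
    (fc_gr D2 j <= fc_gr D1 i)%O /\ fc_dg D2 j = (fc_dg D1 i + r)%N.
Arguments filtered_map {d P} D1 D2 r A.

Definition filtered_chain_map d (P : finPOrderType d) (D1 D2 : fcomplex P)
    (A : 'M['F_2]_(fc_n D1, fc_n D2)) : Prop :=
  filtered_map D1 D2 0 A /\ fc_d D1 *m A = A *m fc_d D2.
Arguments filtered_chain_map {d P} D1 D2 A.

Definition filtered_homotopic d (P : finPOrderType d) (D1 D2 : fcomplex P)
    (A B : 'M['F_2]_(fc_n D1, fc_n D2)) : Prop :=
  exists S : 'M['F_2]_(fc_n D1, fc_n D2),
    filtered_map D1 D2 1 S /\ B - A = S *m fc_d D2 + fc_d D1 *m S.
Arguments filtered_homotopic {d P} D1 D2 A B.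

Definition filtered_chain_homotopy_equivalent d (P : finPOrderType d)
    (D1 D2 : fcomplex P) : Prop :=
  exists (phi : 'M['F_2]_(fc_n D1, fc_n D2)) (phi' : 'M['F_2]_(fc_n D2, fc_n D1)),
    [/\ filtered_chain_map D1 D2 phi, filtered_chain_map D2 D1 phi',
        filtered_homotopic D1 D1 (phi *m phi') 1%:M &
        filtered_homotopic D2 D2 (phi' *m phi) 1%:M].

(* The P-filtered chain complex (C,d) of a Morse decomposition:
   C = (+)_p C_p, C_p spanned by the simplices of M p; the basis is the set
   of pairs (p, sigma) with sigma \in M p; d is the simplicial boundary. *)
Definition morse_basis (V : finType) d (P : finPOrderType d)
    (M : P -> {set {set V}}) : {set P * {set V}} :=
  [set x : P * {set V} | x.2 \in M x.1].

Definition facet (V : finType) (t s : {set V}) : bool :=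
  (t \subset s) && (#|s| == #|t|.+1) && (t != set0).

Definition morse_complex (V : finType) d (P : finPOrderType d)
    (M : P -> {set {set V}}) : fcomplex P :=
  @FComplex d P #|morse_basis M|
    (fun i => (enum_val i).1)
    (fun i => #|(enum_val i).2|.-1)
    (\matrix_(i, j) (facet (enum_val j).2 (enum_val i).2)%:R).

Definition conley_complex (V : finType) d (P : finPOrderType d)
    (M : P -> {set {set V}}) (D : fcomplex P) : Prop :=
  [/\ fcomplex_wf D,
      filtered_chain_homotopy_equivalent D (morse_complex M) &
      forall i j, fc_d D i j != 0 -> fc_gr D i != fc_gr D j].

(* f(p): the common value of f on M p *)
Definition fval (V : finType) d (P : finPOrderType d) (R : realType)
    (M : P -> {set {set V}}) (f : {set V} -> R) (p : P) : R :=
  f (odflt set0 [pick s in M p]).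

Definition lyapunov (V : finType) d (P : finPOrderType d) (R : realType)
    (M : P -> {set {set V}}) (f : {set V} -> R) : Prop :=
  (forall p s t, s \in M p -> t \in M p -> f s = f t) /\
  (forall p q : P, (p <= q)%O -> fval M f p <= fval M f q).

(* An f-compatible order: an enumeration e 0, ..., e (m-1) of P (m = |P|),
   linear extension of <=_P, along which f(p) is nondecreasing. *)
Definition f_compatible_order (V : finType) d (P : finPOrderType d)
    (R : realType) (M : P -> {set {set V}}) (f : {set V} -> R)
    (e : 'I_#|P| -> P) : Prop :=
  [/\ injective e,
      forall i j, (e i <= e j)%O -> (i <= j)%N &
      forall i j : 'I_#|P|, (i <= j)%N -> fval M f (e i) <= fval M f (e j)].

(* A module V_0 -> ... -> V_(m-1) given as V_i = Z i / B i with B i <= Z i  *)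
(* subspaces (row spaces) of a fixed ambient 'rV['F_2]_N and the maps       *)
(* induced by the identity of the ambient space (inclusions).               *)

Record subquot_module (m : nat) := SubquotModule {
  sq_N : nat;
  sq_Z : 'I_m -> 'M['F_2]_sq_N;
  sq_B : 'I_m -> 'M['F_2]_sq_N
}.
Arguments SubquotModule {m} sq_N sq_Z sq_B.
Arguments sq_N {m} s : rename.
Arguments sq_Z {m} s _ : rename.
Arguments sq_B {m} s _ : rename.

(* Interval [a,b] (0-based, a <= b) alive at i *)
Definition alive m (ab : 'I_m * 'I_m) (i : 'I_m) : bool :=
  (ab.1 <= i <= ab.2)%N.

(* The bars bar : 'I_J -> 'I_m * 'I_m give an interval decomposition of the
   module X: there are linear maps Psi i : Z i -> F_2^J with kernel exactly
   B i and image exactly the coordinates of the bars alive at i, compatible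
   with the structure maps (structure map of (+)_j I[a_j,b_j] from i to i+1
   being the coordinate projection onto the bars alive at i+1).  This is
   precisely an isomorphism X ~= (+)_j I[a_j, b_j] of persistence modules. *)
Definition interval_decomposition m (X : subquot_module m) (J : nat)
    (bar : 'I_J -> 'I_m * 'I_m) : Prop :=
  (forall j, ((bar j).1 <= (bar j).2)%N) /\
  exists Psi : 'I_m -> 'M['F_2]_(sq_N X, J),
    [/\ forall i, (sq_Z X i :&: kermx (Psi i) == sq_B X i)%MS,
        forall i, (sq_Z X i *m Psi i ==
                   diag_mx (\row_j (alive (bar j) i)%:R))%MS &
        forall (i i' : 'I_m), nat_of_ord i' = (nat_of_ord i).+1 ->
          sq_Z X i *m Psi i' =
          sq_Z X i *m Psi i *m diag_mx (\row_j (alive (bar j) i')%:R)].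
Arguments interval_decomposition {m} X {J} bar.

(* The persistence diagram of a barcode, for the values fe i = f(p_i):
   bar [a,b] |-> (f(p_a), f(p_(b+1))), with f(p_m) = +oo encoded as None;
   points with f(p_a) = f(p_(b+1)) are discarded.  A multiset = a seq up to
   permutation. *)
Definition pers_diagram (R : realType) m (fe : 'I_m -> R) (J : nat)
    (bar : 'I_J -> 'I_m * 'I_m) : seq (R * option R) :=
  [seq (fe (bar j).1, omap fe (insub (bar j).2.+1 : option 'I_m))
   | j <- enum 'I_J & Some (fe (bar j).1) != omap fe (insub (bar j).2.+1)].
Arguments pers_diagram {R m} fe {J} bar.

Definition sel_mx n (b : 'I_n -> bool) : 'M['F_2]_n := diag_mx (\row_j (b j)%:R).

(* H_k(D_{p_0} (+) ... (+) D_{p_i}), i = 0..m-1, for a P-filtered complex D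
   and an enumeration e of P. *)
Definition in_prefix d (P : finPOrderType d) (e : 'I_#|P| -> P)
    (i : 'I_#|P|) (p : P) : bool :=
  [exists l : 'I_#|P|, (l <= i)%N && (e l == p)].

Definition fc_homology_module d (P : finPOrderType d) (D : fcomplex P)
    (e : 'I_#|P| -> P) (k : nat) : subquot_module #|P| :=
  @SubquotModule #|P| (fc_n D)
    (fun i => (sel_mx (fun j => in_prefix e i (fc_gr D j) && (fc_dg D j == k))
                 :&: kermx (fc_d D))%MS)
    (fun i => sel_mx (fun j => in_prefix e i (fc_gr D j) && (fc_dg D j == k.+1))
                 *m fc_d D).

(* Simplicial chains C(K) over Z_2 (basis: the simplices of K) and
   H_k(C(K_0)) -> ... -> H_k(C(K_(m-1))), K_i = U_{j <= i} M (e j). *)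
Definition simplicial_boundary (V : finType) (K : {set {set V}}) : 'M['F_2]_#|K| :=
  \matrix_(i, j) (facet (enum_val j) (enum_val i))%:R.

Definition filt_subcomplex (V : finType) d (P : finPOrderType d)
    (M : P -> {set {set V}}) (e : 'I_#|P| -> P) (i : 'I_#|P|) : {set {set V}} :=
  \bigcup_(l : 'I_#|P| | (l <= i)%N) M (e l).

Definition simplicial_homology_module (V : finType) (K : {set {set V}}) d
    (P : finPOrderType d) (M : P -> {set {set V}}) (e : 'I_#|P| -> P) (k : nat)
    : subquot_module #|P| :=
  @SubquotModule #|P| #|K|
    (fun i => (sel_mx (fun j : 'I_#|K| => (enum_val j \in filt_subcomplex M e i)
                         && (#|enum_val j| == k.+1))
                 :&: kermx (simplicial_boundary K))%MS)
    (fun i => sel_mx (fun j : 'I_#|K| => (enum_val j \in filt_subcomplex M e i)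
                         && (#|enum_val j| == k.+2))
                 *m simplicial_boundary K).

(* A persistence diagram records only values of f, so it is determined by the
   ranks of the maps H_i -> H_j between indices i <= j that close a level set of
   f along the order (an inclusion-exclusion over births <= u and deaths > v).
   Filtered chain homotopy equivalences preserve all these ranks, and the Morse
   complex (C,d) is isomorphic, as a P-filtered complex, to the simplicial chains
   of K graded by the partition into the sets M_p; this gives the two outer
   equalities.  Two f-compatible orders assign the same value to each index and
   have the same prefix subcomplexes K_i at every index closing a level set,
   which gives the middle one. *)

From HB Require Import structures.
From mathcomp Require Import all_boot all_order all_algebra.
From mathcomp Require Import reals zify.
Set Implicit Arguments.
Unset Strict Implicit.
Unset Printing Implicit Defensive.
Import Order.TTheory GRing.Theory Num.Theory.
Local Open Scope ring_scope.

Section RankLemmas.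
Variable F : fieldType.

Lemma mxrank_mul_ker_le m n p q (A : 'M[F]_(m, n)) (B1 : 'M_(n, p)) (B2 : 'M_(n, q)) :
  (forall v : 'rV_n, (v <= A)%MS -> v *m B2 = 0 -> v *m B1 = 0) ->
  (\rank (A *m B1) <= \rank (A *m B2))%N.
Proof.
move=> kerB21.
suff kerS : (\rank (A :&: kermx B2) <= \rank (A :&: kermx B1))%N.
  by rewrite -(leq_add2r (\rank (A :&: kermx B1))) mxrank_mul_ker
             -(mxrank_mul_ker A B2) leq_add2l.
apply/mxrankS/row_subP => i; rewrite sub_capmx; apply/andP; split.
  exact: submx_trans (row_sub _ _) (capmxSl _ _).
have /andP [vA /sub_kermxP vB2] : (row i (A :&: kermx B2) <= A)%MS &&
    (row i (A :&: kermx B2) <= kermx B2)%MS.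
  by rewrite -sub_capmx row_sub.
exact/sub_kermxP/kerB21.
Qed.

Lemma mxrank_mul_ker_eq m n p q (A : 'M[F]_(m, n)) (B1 : 'M_(n, p)) (B2 : 'M_(n, q)) :
  (forall v : 'rV_n, (v <= A)%MS -> (v *m B1 == 0) = (v *m B2 == 0)) ->
  \rank (A *m B1) = \rank (A *m B2).
Proof.
move=> kerB; apply/eqP; rewrite eqn_leq.
by apply/andP; split; apply: mxrank_mul_ker_le => v vA /eqP vB; apply/eqP;
  rewrite ?kerB // -kerB.
Qed.

Lemma mxrank_diag_bool n (c : pred 'I_n) :
  \rank (diag_mx (\row_j (c j)%:R) : 'M[F]_n) = #|c|.
Proof.
have defD : (diag_mx (\row_j (c j)%:R) :=: \sum_(j | c j) <<delta_mx 0 j : 'rV[F]_n>>)%MS.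
  apply/eqmxP/andP; split.
    apply/row_subP => i; rewrite row_diag_mx mxE.
    case: (boolP (c i)) => ci; last by rewrite scale0r sub0mx.
    by rewrite scale1r (sumsmx_sup i) ?genmxE.
  apply/sumsmx_subP => j cj; rewrite genmxE.
  have <- : row j (diag_mx (\row_j (c j)%:R)) = delta_mx 0 j :> 'rV[F]_n.
    by rewrite row_diag_mx mxE cj scale1r.
  exact: row_sub.
rewrite defD (mxdirectP (mxdirect_delta _ (fun i j _ _ => id))) /= -sum1_card.
by apply/eq_bigr => j _; rewrite mxrank_gen mxrank_delta.
Qed.

End RankLemmas.

Lemma eq_sel_mx n (b b' : 'I_n -> bool) : b =1 b' -> sel_mx b = sel_mx b'.
Proof. by move=> eqb; congr diag_mx; apply/rowP => j; rewrite !mxE eqb. Qed.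

Lemma sel_mxM n (b b' : 'I_n -> bool) :
  sel_mx b *m sel_mx b' = sel_mx (fun j => b j && b' j).
Proof.
rewrite mul_diag_mx; apply/matrixP => i j; rewrite !mxE.
by case: eqP; rewrite ?mulr1n ?mulr0n ?mulr0 // -natrM mulnb.
Qed.

Lemma sel_mx_mul_sub n1 n2 (b1 : 'I_n1 -> bool) (b2 : 'I_n2 -> bool) (A : 'M['F_2]_(n1, n2)) :
  (forall i j, A i j != 0 -> b1 i -> b2 j) -> (sel_mx b1 *m A <= sel_mx b2)%MS.
Proof.
move=> supp; suff -> : sel_mx b1 *m A = sel_mx b1 *m A *m sel_mx b2 by exact: submxMl.
apply/matrixP => i j; rewrite mul_mx_diag mul_diag_mx !mxE.
have [b1i|] := boolP (b1 i); last by rewrite !mul0r.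
have [-> | /supp/(_ b1i) ->] := eqVneq (A i j) 0; first by rewrite !mulr0 mul0r.
by rewrite mulr1.
Qed.

Lemma sel_mxS n (b1 b2 : 'I_n -> bool) :
  (forall j, b1 j -> b2 j) -> (sel_mx b1 <= sel_mx b2)%MS.
Proof.
move=> b12; rewrite -[sel_mx b1]mulmx1; apply: sel_mx_mul_sub => i j.
rewrite mxE; have [<- _ | _] := eqVneq i j; first exact: b12.
by rewrite eqxx.
Qed.

Definition sq_rank m (X : subquot_module m) (i j : 'I_m) : nat :=
  \rank (sq_Z X i *m cokermx (sq_B X j)).

Definition sq_increasing m (X : subquot_module m) : Prop :=
  forall i j : 'I_m, (i <= j)%N -> (sq_Z X i <= sq_Z X j)%MS.

Lemma alive_between m (ab : 'I_m * 'I_m) (i l j : 'I_m) :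
  (i <= l <= j)%N -> alive ab i -> alive ab j -> alive ab l.
Proof. by rewrite /alive; lia. Qed.

Section IntervalDecomposition.
Variables (m : nat) (X : subquot_module m) (J : nat) (bar : 'I_J -> 'I_m * 'I_m).
Variable Psi : 'I_m -> 'M['F_2]_(sq_N X, J).
Hypothesis X_increasing : sq_increasing X.
Hypothesis ker_Psi : forall i, (sq_Z X i :&: kermx (Psi i) == sq_B X i)%MS.
Hypothesis im_Psi : forall i, (sq_Z X i *m Psi i == sel_mx (fun k => alive (bar k) i))%MS.
Hypothesis Psi_step : forall i i' : 'I_m, i' = i.+1 :> nat ->
  sq_Z X i *m Psi i' = sq_Z X i *m Psi i *m sel_mx (fun k => alive (bar k) i').

Lemma im_Psi_from (i j : 'I_m) : (i <= j)%N ->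
  (sq_Z X i *m Psi j :=: sel_mx (fun k => alive (bar k) i && alive (bar k) j))%MS.
Proof.
move=> /subnK; move: (j - i)%N => n; elim: n j => [|n IHn] j def_j.
  have -> : j = i by apply: ord_inj; rewrite -def_j.
  by rewrite (eq_sel_mx (fun k => andbb _)); apply/eqmxP.
have lt_j0 : (n + i < m)%N by rewrite -addSn def_j ltnW.
pose j0 := Ordinal lt_j0.
have /submxP [W defZi] : (sq_Z X i <= sq_Z X j0)%MS by apply: X_increasing; rewrite leq_addl.
have step_j : j = j0.+1 :> nat by rewrite -def_j.
rewrite defZi -mulmxA (Psi_step step_j) !mulmxA -defZi.
apply: eqmx_trans (eqmxMr _ (IHn j0 erefl)) _; rewrite sel_mxM.
rewrite (eq_sel_mx (b' := fun k => alive (bar k) i && alive (bar k) j)) => [|k].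
  exact: eqmx_refl.
apply/idP/idP => [/andP [/andP [-> _] ->] // | /andP [ai aj]].
by rewrite ai aj (@alive_between _ _ i j0 j) //= -def_j addSn leq_addl leqnSn.
Qed.

Lemma sq_rank_alive (i j : 'I_m) : (i <= j)%N ->
  #|[pred k | alive (bar k) i && alive (bar k) j]| = sq_rank X i j.
Proof.
move=> le_ij; rewrite -(@mxrank_diag_bool 'F_2) -(im_Psi_from le_ij).
apply: mxrank_mul_ker_eq => v vZi.
rewrite -sub_kermx -submxE -(eqmxP (ker_Psi j)) sub_capmx.
by rewrite (submx_trans vZi (X_increasing le_ij)).
Qed.

End IntervalDecomposition.

Lemma interval_decomposition_rank m (X : subquot_module m) J (bar : 'I_J -> 'I_m * 'I_m)
    (i j : 'I_m) :
  sq_increasing X -> interval_decomposition X bar -> (i <= j)%N ->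
  #|[pred k | alive (bar k) i && alive (bar k) j]| = sq_rank X i j.
Proof. by move=> Xinc [_ [Psi [kerPsi imPsi stepPsi]]]; exact: sq_rank_alive. Qed.

Section DiagramRank.
Variable R : realDomainType.
Implicit Types (s : seq (R * option R)) (a u v : R).

Definition dies_after (y : option R) v : bool := if y is Some w then v < w else true.

Definition diagram_rank s u v : nat := count (fun z => (z.1 <= u) && dies_after z.2 v) s.

Lemma exists_le_iff_lt (xs : seq R) a :
  exists2 a', a' < a & {in xs, forall x, (x <= a') = (x < a)}.
Proof.
elim: xs => [|x xs [a' lt_a'a IH]]; first by exists (a - 1); rewrite // gtrBl ltr01.
have [lt_xa | le_ax] := ltP x a.
  exists (Num.max a' x); first by rewrite gt_max lt_a'a.
  move=> y; rewrite inE => /predU1P [-> | ys]; first by rewrite le_max lexx orbT.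
  by rewrite le_max IH //; case: ltP => //= le_ay; rewrite leNgt (lt_le_trans lt_xa le_ay).
exists a' => // y; rewrite inE => /predU1P [-> | ]; last exact: IH.
by rewrite ltNge le_ax leNgt (lt_le_trans lt_a'a le_ax).
Qed.

Lemma exists_ub (xs : seq R) a : exists2 V, a <= V & {in xs, forall x, x <= V}.
Proof.
elim: xs => [|x xs [V le_aV IH]]; first by exists a.
exists (Num.max V x); first by rewrite le_max le_aV.
by move=> y; rewrite inE le_max => /predU1P [-> | /IH ->]; rewrite ?lexx ?orbT.
Qed.

Lemma count_point_finite s a a' y y' :
  {in s, forall z, (z.1 <= a') = (z.1 < a)} ->
  {in s, forall z w, z.2 = Some w -> (w <= y') = (w < y)} ->
  (count_mem (a, Some y) s + diagram_rank s a' y' + diagram_rank s a y =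
   diagram_rank s a y' + diagram_rank s a' y)%N.
Proof.
elim: s => [//|[x w] s IH] births deaths.
have sub_s : {subset s <= (x, w) :: s} by move=> z zs; rewrite inE zs orbT.
have {IH} := IH (sub_in1 sub_s births) (sub_in1 sub_s deaths).
rewrite /diagram_rank /= (births (x, w)) ?mem_head //= xpair_eqE.
case: w {births sub_s} deaths => [w|] deaths /=; last by rewrite andbF; case: ltgtP; lia.
rewrite (ltNge y') (deaths (x, Some w)) ?mem_head // -leNgt -[Some w == _]/(w == y).
by case: (ltgtP x a); case: (ltgtP w y); lia.
Qed.

Lemma count_point_essential s a a' V :
  {in s, forall z, (z.1 <= a') = (z.1 < a)} ->
  {in s, forall z w, z.2 = Some w -> w <= V} ->
  (count_mem (a, None) s + diagram_rank s a' V = diagram_rank s a V)%N.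
Proof.
elim: s => [//|[x w] s IH] births deaths.
have sub_s : {subset s <= (x, w) :: s} by move=> z zs; rewrite inE zs orbT.
have {IH} := IH (sub_in1 sub_s births) (sub_in1 sub_s deaths).
rewrite /diagram_rank /= (births (x, w)) ?mem_head //= xpair_eqE.
case: w {births sub_s} deaths => [w|] deaths /=; last by case: ltgtP => /=; lia.
by rewrite (ltNge V w) (deaths (x, Some w)) ?mem_head // !andbF; lia.
Qed.

Lemma perm_diagram_rank s1 s2 :
  {in s1 ++ s2, forall z, dies_after z.2 z.1} ->
  (forall u v, u <= v -> diagram_rank s1 u v = diagram_rank s2 u v) ->
  perm_eq s1 s2.
Proof.
move=> valid eq_rank; apply/allP => -[a y] _; apply/eqP.
have sub1 : {subset s1 <= s1 ++ s2} by move=> z; rewrite mem_cat => ->.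
have sub2 : {subset s2 <= s1 ++ s2} by move=> z; rewrite mem_cat orbC => ->.
have [a' lt_a'a births] := exists_le_iff_lt (unzip1 (s1 ++ s2)) a.
have {}births : {in s1 ++ s2, forall z, (z.1 <= a') = (z.1 < a)}.
  by move=> z zs; apply: births; apply: map_f.
have death_in z w : z \in s1 ++ s2 -> z.2 = Some w -> w \in pmap snd (s1 ++ s2).
  by move=> zs zw; rewrite mem_pmap -zw map_f.
(* With no birth in (a', a) and no death in (y', y), the multiplicity of
   (a, y) is a second difference of diagram_rank; for y = +oo, V bounds all
   finite deaths. *)
case: y => [y|]; last first.
  have [V le_aV deaths] := exists_ub (pmap snd (s1 ++ s2)) a.
  have {}deaths : {in s1 ++ s2, forall z w, z.2 = Some w -> w <= V}.
    by move=> z zs w /(death_in z w zs); apply: deaths.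
  have ess1 := count_point_essential (sub_in1 sub1 births) (sub_in1 sub1 deaths).
  have ess2 := count_point_essential (sub_in1 sub2 births) (sub_in1 sub2 deaths).
  have le_a'V : a' <= V := le_trans (ltW lt_a'a) le_aV.
  apply/eqP; rewrite -(eqn_add2r (diagram_rank s1 a' V)) ess1 (eq_rank a' V le_a'V).
  by rewrite ess2 eq_rank.
have [lt_ay | le_ya] := ltP a y; last first.
  suff no_pt t : {subset t <= s1 ++ s2} -> count_mem (a, Some y) t = 0%N.
    by rewrite !no_pt.
  by move=> sub; apply/count_memPn/negP => /sub/valid /=; rewrite ltNge le_ya.
have [y' lt_y'y deaths] := exists_le_iff_lt (a :: pmap snd (s1 ++ s2)) y.
have le_ay' : a <= y' by rewrite deaths ?mem_head.
have {}deaths : {in s1 ++ s2, forall z w, z.2 = Some w -> (w <= y') = (w < y)}.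
  by move=> z zs w /(death_in z w zs) ws; apply: deaths; rewrite inE ws orbT.
have pt1 := count_point_finite (sub_in1 sub1 births) (sub_in1 sub1 deaths).
have pt2 := count_point_finite (sub_in1 sub2 births) (sub_in1 sub2 deaths).
have le_a'y' := le_trans (ltW lt_a'a) le_ay'.
have le_a'y := le_trans (ltW lt_a'a) (ltW lt_ay).
apply/eqP; rewrite -(eqn_add2r (diagram_rank s1 a' y' + diagram_rank s1 a y)) addnA pt1.
by rewrite (eq_rank _ _ le_ay') (eq_rank _ _ le_a'y) (eq_rank _ _ le_a'y')
  (eq_rank _ _ (ltW lt_ay)) addnA pt2.
Qed.

End DiagramRank.

Section PersistenceDiagram.
Variables (R : realType) (m : nat) (fe : 'I_m -> R).
Hypothesis fe_mono : forall i j : 'I_m, (i <= j)%N -> fe i <= fe j.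

Definition last_of_level (i : 'I_m) : Prop := forall j : 'I_m, (i < j)%N -> fe i < fe j.

Lemma sublevel_last u i0 : fe i0 <= u ->
  exists2 iu : 'I_m, last_of_level iu & forall i, (fe i <= u) = (i <= iu)%N.
Proof.
move=> le_i0u; case: (@arg_maxnP _ i0 (fun i => fe i <= u) val le_i0u) => iu le_iuu iu_max.
have sub_u i : (fe i <= u) = (i <= iu)%N.
  by apply/idP/idP => [/iu_max // | /fe_mono le_fe]; exact: le_trans le_fe le_iuu.
by exists iu => // j lt_iuj; rewrite (le_lt_trans le_iuu) // ltNge sub_u -ltnNge.
Qed.

Lemma dies_after_next (bb : 'I_m) v (iv : 'I_m) :
  (forall i, (fe i <= v) = (i <= iv)%N) ->
  dies_after (omap fe (insub bb.+1)) v = (iv <= bb)%N.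
Proof.
move=> sub_v; case: insubP => [k _ kE | m_le] /=; first by rewrite ltNge sub_v -ltnNge kE.
by apply/esym; rewrite -ltnS (leq_trans (ltn_ord iv)) // leqNgt.
Qed.

Lemma pers_diagram_valid J (b : 'I_J -> 'I_m * 'I_m) :
  (forall k, ((b k).1 <= (b k).2)%N) ->
  {in pers_diagram fe b, forall z, dies_after z.2 z.1}.
Proof.
move=> bar_ok z /mapP [k]; rewrite mem_filter => /andP [+ _] ->.
case: insubP => [l _ lE | //] /= ne; rewrite lt_neqAle.
rewrite -[fe _ != _]/(Some (fe (b k).1) != Some (fe l)) ne fe_mono //.
by rewrite lE ltnW // ltnS bar_ok.
Qed.

Lemma count_pers_diagram J (b : 'I_J -> 'I_m * 'I_m) (Q : pred (R * option R)) :
  (forall x, ~~ Q (x, Some x)) ->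
  count Q (pers_diagram fe b) =
  #|[pred k | Q (fe (b k).1, omap fe (insub (b k).2.+1))]|.
Proof.
move=> Q_diag; rewrite count_map count_filter enumT cardE /enum_mem size_filter.
apply: eq_count => k; rewrite !inE.
by case: eqP => [<- | _]; rewrite ?andbT // (negbTE (Q_diag _)).
Qed.

Lemma pers_diagram_rankE J (b : 'I_J -> 'I_m * 'I_m) u v :
  u <= v ->
  diagram_rank (pers_diagram fe b) u v =
  #|[pred k | (fe (b k).1 <= u) && dies_after (omap fe (insub (b k).2.+1)) v]|.
Proof.
move=> le_uv; apply: count_pers_diagram => x /=.
by rewrite negb_and -leNgt; case: leP => //= le_xu; exact: le_trans le_xu le_uv.
Qed.

Lemma diagram_rank_sq_rank (X : subquot_module m) J (b : 'I_J -> 'I_m * 'I_m)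
    u v (iu iv : 'I_m) :
  sq_increasing X -> interval_decomposition X b ->
  (forall i, (fe i <= u) = (i <= iu)%N) -> (forall i, (fe i <= v) = (i <= iv)%N) ->
  u <= v -> (iu <= iv)%N ->
  diagram_rank (pers_diagram fe b) u v = sq_rank X iu iv.
Proof.
move=> Xinc Xdec sub_u sub_v le_uv le_iuiv.
rewrite pers_diagram_rankE // -(interval_decomposition_rank Xinc Xdec le_iuiv).
apply: eq_card => k; rewrite !inE sub_u (dies_after_next _ sub_v) /alive; lia.
Qed.

Lemma perm_pers_diagram (X1 X2 : subquot_module m) J1 J2
    (b1 : 'I_J1 -> 'I_m * 'I_m) (b2 : 'I_J2 -> 'I_m * 'I_m) :
  sq_increasing X1 -> sq_increasing X2 ->
  interval_decomposition X1 b1 -> interval_decomposition X2 b2 ->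
  (forall i j : 'I_m, (i <= j)%N -> last_of_level i -> last_of_level j ->
     sq_rank X1 i j = sq_rank X2 i j) ->
  perm_eq (pers_diagram fe b1) (pers_diagram fe b2).
Proof.
move=> X1inc X2inc X1dec X2dec eq_rank; apply: perm_diagram_rank => [z | u v le_uv].
  by rewrite mem_cat => /orP [/(pers_diagram_valid (proj1 X1dec))
                              | /(pers_diagram_valid (proj1 X2dec))].
have [i0 le_i0u | above_u] := pickP (fun i => fe i <= u); last first.
  by rewrite !pers_diagram_rankE // !eq_card0 // => k; rewrite !inE above_u.
have [iu last_iu sub_u] := sublevel_last le_i0u.
have [iv last_iv sub_v] := sublevel_last (le_trans le_i0u le_uv).
have le_iuiv : (iu <= iv)%N by rewrite -sub_v (le_trans _ le_uv) ?sub_u.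
by rewrite (diagram_rank_sq_rank X1inc X1dec sub_u sub_v)
  ?(diagram_rank_sq_rank X2inc X2dec sub_u sub_v) ?eq_rank.
Qed.

End PersistenceDiagram.

Lemma in_prefix_mono d (P : finPOrderType d) (e : 'I_#|P| -> P) (i i' : 'I_#|P|) p :
  (i <= i')%N -> in_prefix e i p -> in_prefix e i' p.
Proof.
move=> le_ii' /existsP [l /andP [le_li ep]]; apply/existsP; exists l.
by rewrite ep (leq_trans le_li le_ii').
Qed.

Definition prefixes_down_closed d (P : finPOrderType d) (e : 'I_#|P| -> P) : Prop :=
  forall i (p q : P), (q <= p)%O -> in_prefix e i p -> in_prefix e i q.

Section FilteredHomology.
Variables (d : Order.disp_t) (P : finPOrderType d) (e : 'I_#|P| -> P).
Implicit Types (D : fcomplex P) (i j : 'I_#|P|) (k : nat).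

Definition prefix_chains D i k : 'M['F_2]_(fc_n D) :=
  sel_mx (fun l => in_prefix e i (fc_gr D l) && (fc_dg D l == k)).

Lemma prefix_chainsS D i i' k :
  (i <= i')%N -> (prefix_chains D i k <= prefix_chains D i' k)%MS.
Proof.
move=> le_ii'; apply: sel_mxS => l /andP [pl ->]; rewrite andbT.
exact: in_prefix_mono pl.
Qed.

Lemma fc_homology_increasing D k : sq_increasing (fc_homology_module D e k).
Proof. by move=> i j le_ij; apply: capmxS => //; exact: prefix_chainsS. Qed.

Hypothesis prefix_down : prefixes_down_closed e.

Lemma filtered_map_prefix_chains D1 D2 r A i k :
  filtered_map D1 D2 r A -> (prefix_chains D1 i k *m A <= prefix_chains D2 i (k + r))%MS.
Proof.
move=> A_filt; apply: sel_mx_mul_sub => a b /A_filt [le_ba ->] /andP [pa /eqP ->].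
by rewrite eqxx andbT (prefix_down le_ba).
Qed.

Lemma chain_map_cycles D1 D2 phi i k : filtered_chain_map D1 D2 phi ->
  (sq_Z (fc_homology_module D1 e k) i *m phi <= sq_Z (fc_homology_module D2 e k) i)%MS.
Proof.
move=> [phi_filt phi_chain] /=; rewrite sub_capmx; apply/andP; split.
  have := filtered_map_prefix_chains i k phi_filt; rewrite addn0.
  exact: submx_trans (submxMr _ (capmxSl _ _)).
apply/sub_kermxP; rewrite -mulmxA -phi_chain mulmxA.
by have /sub_kermxP -> := capmxSr (prefix_chains D1 i k) (kermx (fc_d D1)); rewrite mul0mx.
Qed.

Lemma homotopy_retract_boundary D1 D2 phi phi' i j k (v : 'rV_(fc_n D1)) :
  filtered_chain_map D2 D1 phi' -> filtered_homotopic D1 D1 (phi *m phi') 1%:M ->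
  (i <= j)%N -> (v <= sq_Z (fc_homology_module D1 e k) i)%MS ->
  (v *m phi <= sq_B (fc_homology_module D2 e k) j)%MS ->
  (v <= sq_B (fc_homology_module D1 e k) j)%MS.
Proof.
move=> [phi'_filt phi'_chain] [S [S_filt htpy]] le_ij /=.
rewrite sub_capmx => /andP [v_chains /sub_kermxP v_cycle] /submxP [w v_phi].
have -> : v = v *m phi *m phi' + v *m S *m fc_d D1.
  have := congr1 (mulmx v) htpy.
  rewrite mulmxBr mulmx1 mulmxDr !mulmxA v_cycle mul0mx addr0 => <-.
  by rewrite addrC subrK.
apply: addmx_sub.
  rewrite v_phi -!mulmxA phi'_chain !mulmxA; apply: submxMr.
  rewrite -mulmxA; apply: submx_trans (submxMl w _) _.
  by have := filtered_map_prefix_chains j k.+1 phi'_filt; rewrite addn0.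
have := filtered_map_prefix_chains i k S_filt; rewrite addn1 => S_chains.
apply/submxMr/(submx_trans (submxMr S v_chains))/(submx_trans S_chains).
exact: prefix_chainsS.
Qed.

Lemma homotopy_retract_sq_rank_le D1 D2 phi phi' i j k :
  filtered_chain_map D1 D2 phi -> filtered_chain_map D2 D1 phi' ->
  filtered_homotopic D1 D1 (phi *m phi') 1%:M -> (i <= j)%N ->
  (sq_rank (fc_homology_module D1 e k) i j <= sq_rank (fc_homology_module D2 e k) i j)%N.
Proof.
move=> phi_chain phi'_chain htpy le_ij; rewrite /sq_rank.
set Z1 := sq_Z _ i; set B2 := sq_B (fc_homology_module D2 e k) j.
apply: (@leq_trans (\rank (Z1 *m (phi *m cokermx B2)))).
  apply: mxrank_mul_ker_le => v vZ1 v_phi; apply/eqP; rewrite -submxE.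
  apply: homotopy_retract_boundary phi'_chain htpy le_ij vZ1 _.
  by rewrite submxE -mulmxA v_phi.
by rewrite mulmxA mxrankS // submxMr // chain_map_cycles.
Qed.

Lemma homotopy_equivalent_sq_rank D1 D2 i j k :
  filtered_chain_homotopy_equivalent D1 D2 -> (i <= j)%N ->
  sq_rank (fc_homology_module D1 e k) i j = sq_rank (fc_homology_module D2 e k) i j.
Proof.
move=> [phi [phi' [phi_chain phi'_chain htpy12 htpy21]]] le_ij; apply/eqP.
by rewrite eqn_leq (homotopy_retract_sq_rank_le k phi_chain phi'_chain htpy12 le_ij)
  (homotopy_retract_sq_rank_le k phi'_chain phi_chain htpy21 le_ij).
Qed.

End FilteredHomology.

Lemma sum_mul_indicator1 (R : pzSemiRingType) (T : finType) (c : pred T) (F : T -> R) j0 :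
  c =1 pred1 j0 -> \sum_j (c j)%:R * F j = F j0.
Proof.
move=> c1; rewrite (bigD1 j0) //= c1 /= eqxx mul1r big1 ?addr0 // => j /negbTE nj.
by rewrite c1 /= nj mul0r.
Qed.

Lemma filtered_homotopic_refl d (P : finPOrderType d) (D1 D2 : fcomplex P) A :
  filtered_homotopic D1 D2 A A.
Proof. by exists 0; split=> [i j|]; rewrite ?mxE ?eqxx // subrr mul0mx mulmx0 addr0. Qed.

Section MorseComplex.
Variables (V : finType) (K : {set {set V}}) (d : Order.disp_t) (P : finPOrderType d).
Variables (M : P -> {set {set V}}) (p0 : P).
Hypothesis M_sub : forall p, M p \subset K.
Hypothesis M_disjoint : forall p q, p != q -> [disjoint M p & M q].
Hypothesis M_cover : forall s, s \in K -> exists p, s \in M p.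

(* p0 is only a default for sets outside K. *)
Definition morse_index (s : {set V}) : P := odflt p0 [pick p | s \in M p].

Lemma morse_indexP s : s \in K -> s \in M (morse_index s).
Proof.
move=> /M_cover [p sMp]; rewrite /morse_index.
by case: pickP => [q // | /(_ p)]; rewrite sMp.
Qed.

Lemma morse_index_eq p s : s \in M p -> morse_index s = p.
Proof.
move=> sMp; have sMi := morse_indexP (subsetP (M_sub p) s sMp).
have [// | /M_disjoint/disjointFr/(_ sMi)] := eqVneq (morse_index s) p.
by rewrite sMp.
Qed.

Definition simplicial_fcomplex : fcomplex P :=
  FComplex #|K| (fun j => morse_index (enum_val j)) (fun j => #|enum_val j|.-1)
    (simplicial_boundary K).

Let MC := morse_complex M.

Lemma morse_basis_mem (i : 'I_#|morse_basis M|) : (enum_val i).2 \in M (enum_val i).1.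
Proof. by have := enum_valP i; rewrite inE. Qed.

Lemma morse_basis_simplex (i : 'I_#|morse_basis M|) : (enum_val i).2 \in K.
Proof. exact: subsetP (M_sub _) _ (morse_basis_mem i). Qed.

Lemma morse_basis_index s : s \in K -> (morse_index s, s) \in morse_basis M.
Proof. by move=> sK; rewrite inE /= morse_indexP. Qed.

Lemma simplex_eq_enum_val s (sK : s \in K) (j : 'I_#|K|) :
  (s == enum_val j) = (j == enum_rank_in sK s).
Proof.
apply/eqP/eqP => [def_s | ->]; last by rewrite enum_rankK_in.
by apply: enum_val_inj; rewrite enum_rankK_in.
Qed.

Lemma morse_basis_eq_enum_val s (sK : s \in K) (i : 'I_#|morse_basis M|) :
  ((enum_val i).2 == s) = (i == enum_rank_in (morse_basis_index sK) (morse_index s, s)).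
Proof.
apply/eqP/eqP => [def_s | ->]; last by rewrite enum_rankK_in // morse_basis_index.
have def_i : enum_val i = (morse_index s, s).
  by rewrite -def_s (morse_index_eq (morse_basis_mem i)) -surjective_pairing.
by apply: enum_val_inj; rewrite enum_rankK_in // morse_basis_index.
Qed.

Definition forget_index : 'M['F_2]_(#|morse_basis M|, #|K|) :=
  \matrix_(i, j) ((enum_val i).2 == enum_val j)%:R.

Lemma forget_indexK : forget_index *m forget_index^T = 1%:M.
Proof.
apply/matrixP => i i'; rewrite !mxE.
under eq_bigr => j _ do rewrite !mxE.
rewrite (sum_mul_indicator1 _ (simplex_eq_enum_val (morse_basis_simplex i))).
rewrite enum_rankK_in ?morse_basis_simplex //; apply: (congr1 (fun b : bool => b%:R)).
apply/eqP/eqP => [eq2 | -> //]; apply: enum_val_inj.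
rewrite [enum_val i]surjective_pairing [enum_val i']surjective_pairing -eq2.
by rewrite -(morse_index_eq (morse_basis_mem i)) -(morse_index_eq (morse_basis_mem i')) eq2.
Qed.

Lemma forget_indexVK : forget_index^T *m forget_index = 1%:M.
Proof.
apply/matrixP => j j'; rewrite !mxE.
under eq_bigr => i _ do rewrite !mxE.
rewrite (sum_mul_indicator1 _ (morse_basis_eq_enum_val (enum_valP j))).
by rewrite enum_rankK_in ?morse_basis_index ?enum_valP //= (inj_eq enum_val_inj).
Qed.

Lemma forget_index_chain : fc_d MC *m forget_index = forget_index *m fc_d simplicial_fcomplex.
Proof.
apply/matrixP => i j; rewrite !mxE.
under eq_bigr => l _ do rewrite !mxE mulrC.
rewrite (sum_mul_indicator1 _ (morse_basis_eq_enum_val (enum_valP j))).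
rewrite enum_rankK_in ?morse_basis_index ?enum_valP //=.
under eq_bigr => l _ do rewrite !mxE.
rewrite (sum_mul_indicator1 _ (simplex_eq_enum_val (morse_basis_simplex i))).
by rewrite enum_rankK_in ?morse_basis_simplex // mxE.
Qed.

Lemma forget_index_filtered : filtered_map MC simplicial_fcomplex 0 forget_index.
Proof.
move=> i j; rewrite mxE; have [eq_ij _ | _] := eqVneq (enum_val i).2; last by rewrite eqxx.
by rewrite /= -eq_ij (morse_index_eq (morse_basis_mem i)) lexx addn0.
Qed.

Lemma forget_indexT_filtered : filtered_map simplicial_fcomplex MC 0 forget_index^T.
Proof.
move=> j i; rewrite !mxE; have [eq_ij _ | _] := eqVneq (enum_val i).2; last by rewrite eqxx.
by rewrite /= -eq_ij (morse_index_eq (morse_basis_mem i)) lexx addn0.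
Qed.

Lemma morse_complex_equivalent :
  filtered_chain_homotopy_equivalent MC simplicial_fcomplex.
Proof.
exists forget_index, forget_index^T; split.
- exact: (conj forget_index_filtered forget_index_chain).
- split; first exact: forget_indexT_filtered.
  have := congr1 (fun A => forget_index^T *m A *m forget_index^T) forget_index_chain.
  by rewrite /= !mulmxA forget_indexVK mul1mx -!mulmxA forget_indexK mulmx1 => ->.
- by rewrite forget_indexK; exact: filtered_homotopic_refl.
- by rewrite forget_indexVK; exact: filtered_homotopic_refl.
Qed.

End MorseComplex.

Lemma eq_pers_diagram (R : realType) m (fe fe' : 'I_m -> R) J (b : 'I_J -> 'I_m * 'I_m) :
  fe =1 fe' -> pers_diagram fe b = pers_diagram fe' b.
Proof.
move=> eq_fe; have eq_omap (x : option 'I_m) : omap fe x = omap fe' x.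
  by case: x => //= x; rewrite eq_fe.
rewrite /pers_diagram; under eq_filter => k do rewrite eq_fe eq_omap.
by under eq_map => k do rewrite eq_fe eq_omap.
Qed.

Section CompatibleOrders.
Variables (V : finType) (d : Order.disp_t) (P : finPOrderType d).
Variables (M : P -> {set {set V}}) (R : realType) (f : {set V} -> R).
Implicit Types (e : 'I_#|P| -> P) (i : 'I_#|P|).

Lemma f_compatible_order_onto e : f_compatible_order M f e -> forall p, exists l, e l = p.
Proof.
case=> e_inj _ _ p; have /codomP [l ->] : p \in codom e.
  by apply: inj_card_onto; rewrite ?card_ord.
by exists l.
Qed.

Lemma f_compatible_prefixes_down_closed e :
  f_compatible_order M f e -> prefixes_down_closed e.
Proof.
move=> e_compat i p q le_qp /existsP [l /andP [le_li /eqP def_p]].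
have [l' def_q] := f_compatible_order_onto e_compat q.
case: e_compat => _ e_linear _; apply/existsP; exists l'; rewrite def_q eqxx andbT.
by apply: leq_trans le_li; apply: e_linear; rewrite def_q def_p.
Qed.

Lemma f_compatible_sorted e : f_compatible_order M f e ->
  sorted <=%O [seq fval M f (e i) | i <- enum 'I_#|P|].
Proof.
case=> _ _ fe_mono; rewrite sorted_map.
have : sorted (relpre val leq) (enum 'I_#|P|) by rewrite -sorted_map val_enum_ord iota_sorted.
by apply: sub_sorted => i j /=; apply: fe_mono.
Qed.

Lemma f_compatible_perm_enum e : f_compatible_order M f e ->
  perm_eq [seq e i | i <- enum 'I_#|P|] (enum P).
Proof.
move=> e_compat; have [e_inj _ _] := e_compat.
apply: uniq_perm; rewrite ?(map_inj_uniq e_inj) ?enum_uniq // => p.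
have [l <-] := f_compatible_order_onto e_compat p.
by rewrite map_f ?mem_enum.
Qed.

Lemma f_compatible_fval_eq e e' : f_compatible_order M f e -> f_compatible_order M f e' ->
  forall i, fval M f (e i) = fval M f (e' i).
Proof.
move=> e_compat e'_compat i.
have : perm_eq [seq fval M f (e i) | i <- enum 'I_#|P|]
               [seq fval M f (e' i) | i <- enum 'I_#|P|].
  rewrite (map_comp (fval M f) e) (map_comp (fval M f) e'); apply: perm_map.
  by rewrite (perm_trans (f_compatible_perm_enum e_compat)) // perm_sym f_compatible_perm_enum.
move/(sorted_eq le_trans le_anti (f_compatible_sorted e_compat)
  (f_compatible_sorted e'_compat)).
by move/eq_in_map; apply; rewrite mem_enum.
Qed.

Lemma mem_filt_subcomplex e i s :
  (s \in filt_subcomplex M e i) = [exists p, in_prefix e i p && (s \in M p)].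
Proof.
apply/bigcupP/existsP => [[l le_li sM] | [p /andP [/existsP [l /andP [le_li /eqP <-]] sM]]].
  by exists (e l); rewrite sM andbT; apply/existsP; exists l; rewrite le_li eqxx.
by exists l.
Qed.

Lemma in_prefix_last_of_level e i : f_compatible_order M f e ->
  last_of_level (fun i => fval M f (e i)) i ->
  forall p, in_prefix e i p = (fval M f p <= fval M f (e i)).
Proof.
move=> e_compat i_last p; apply/existsP/idP => [[l /andP [le_li /eqP <-]] | le_pi].
  by case: e_compat => _ _; apply.
have [l def_p] := f_compatible_order_onto e_compat p.
exists l; rewrite def_p eqxx andbT leqNgt; apply: contraL le_pi => /i_last.
by rewrite def_p -ltNge.
Qed.

Lemma filt_subcomplex_last_of_level e e' i :
  f_compatible_order M f e -> f_compatible_order M f e' ->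
  last_of_level (fun i => fval M f (e i)) i -> filt_subcomplex M e i = filt_subcomplex M e' i.
Proof.
move=> e_compat e'_compat i_last; have fvalE := f_compatible_fval_eq e_compat e'_compat.
have i_last' : last_of_level (fun i => fval M f (e' i)) i.
  by move=> j lt_ij; rewrite -!fvalE; apply: i_last.
apply/setP => s; rewrite !mem_filt_subcomplex; apply: eq_existsb => p.
by rewrite (in_prefix_last_of_level e_compat i_last)
  (in_prefix_last_of_level e'_compat i_last') fvalE.
Qed.

Lemma simplicial_homology_increasing (K : {set {set V}}) e k :
  sq_increasing (simplicial_homology_module K M e k).
Proof.
move=> i j le_ij /=; apply: capmxS => //; apply: sel_mxS => t /andP [+ ->].
rewrite andbT !mem_filt_subcomplex => /existsP [p /andP [pi sMp]].
by apply/existsP; exists p; rewrite sMp (in_prefix_mono le_ij).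
Qed.

End CompatibleOrders.

Section ConleyPersistence.
Variables (V : finType) (K : {set {set V}}) (d : Order.disp_t) (P : finPOrderType d).
Variable M : P -> {set {set V}}.
Hypothesis K_complex : simplicial_complex K.
Hypothesis M_sub : forall p, M p \subset K.
Hypothesis M_disjoint : forall p q, p != q -> [disjoint M p & M q].
Hypothesis M_cover : forall s, s \in K -> exists p, s \in M p.
Implicit Types (e : 'I_#|P| -> P) (i j : 'I_#|P|).

Lemma simplicial_homology_sq_rank p0 e k i j :
  sq_rank (simplicial_homology_module K M e k) i j =
  sq_rank (fc_homology_module (simplicial_fcomplex K M p0) e k) i j.
Proof.
have sel_eq i' k' : (fun t : 'I_#|K| =>
    (enum_val t \in filt_subcomplex M e i') && (#|enum_val t| == k'.+1)) =1
  (fun t => in_prefix e i' (morse_index M p0 (enum_val t)) && (#|enum_val t|.-1 == k')).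
  move=> t; have tK := enum_valP t; congr andb.
    rewrite mem_filt_subcomplex; apply/existsP/idP => [[p /andP [pi' tMp]] | pi'].
      by rewrite (morse_index_eq p0 M_sub M_disjoint M_cover tMp).
    by exists (morse_index M p0 (enum_val t)); rewrite pi' (morse_indexP p0 M_cover).
  have : enum_val t != set0 by case: K_complex => K0 _; apply: contraNneq K0 => <-.
  by rewrite -card_gt0; case: #|enum_val t|.
by rewrite /sq_rank /= (eq_sel_mx (sel_eq i k)) (eq_sel_mx (sel_eq j k.+1)).
Qed.

Lemma conley_sq_rank e (D : fcomplex P) k i j :
  prefixes_down_closed e -> conley_complex M D -> (i <= j)%N ->
  sq_rank (fc_homology_module D e k) i j = sq_rank (simplicial_homology_module K M e k) i j.
Proof.
move=> down [_ D_equiv _] le_ij.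
have MK_equiv := morse_complex_equivalent (e i) M_sub M_disjoint M_cover.
rewrite (homotopy_equivalent_sq_rank down k D_equiv le_ij).
by rewrite (homotopy_equivalent_sq_rank down k MK_equiv le_ij)
  (simplicial_homology_sq_rank (e i)).
Qed.

End ConleyPersistence.

Theorem theorem4 (V : finType) (K : {set {set V}}) (mv : {set {set {set V}}})
    (d : Order.disp_t) (P : finPOrderType d) (M : P -> {set {set V}})
    (R : realType) (f : {set V} -> R)
    (e e' : 'I_#|P| -> P) (Cb Cb' : fcomplex P) :
  simplicial_complex K ->
  multivector_field K mv ->
  morse_decomposition K mv M ->
  lyapunov M f ->
  f_compatible_order M f e ->
  f_compatible_order M f e' ->
  conley_complex M Cb ->
  conley_complex M Cb' ->
  forall (k : nat) (J1 J2 J3 J4 : nat)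
    (b1 : 'I_J1 -> 'I_#|P| * 'I_#|P|) (b2 : 'I_J2 -> 'I_#|P| * 'I_#|P|)
    (b3 : 'I_J3 -> 'I_#|P| * 'I_#|P|) (b4 : 'I_J4 -> 'I_#|P| * 'I_#|P|),
  interval_decomposition (fc_homology_module Cb e k) b1 ->
  interval_decomposition (simplicial_homology_module K M e k) b2 ->
  interval_decomposition (simplicial_homology_module K M e' k) b3 ->
  interval_decomposition (fc_homology_module Cb' e' k) b4 ->
  let fe := fun i => fval M f (e i) in
  let fe' := fun i => fval M f (e' i) in
  [/\ perm_eq (pers_diagram fe b1) (pers_diagram fe b2),
      perm_eq (pers_diagram fe b2) (pers_diagram fe' b3) &
      perm_eq (pers_diagram fe' b3) (pers_diagram fe' b4)].
Proof.
move=> K_complex _ [M_sub _ M_disjoint M_cover _] _ e_compat e'_compat Cb_conley Cb'_conley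
  k J1 J2 J3 J4 b1 b2 b3 b4 dec1 dec2 dec3 dec4 fe fe'.
have [_ _ fe_mono] := e_compat; have [_ _ fe'_mono] := e'_compat.
have conley_rank := conley_sq_rank K_complex M_sub M_disjoint M_cover.
have e_down := f_compatible_prefixes_down_closed e_compat.
have e'_down := f_compatible_prefixes_down_closed e'_compat.
split.
- apply: (perm_pers_diagram fe_mono (fc_homology_increasing _ _ _)
    (simplicial_homology_increasing _ _ _ _) dec1 dec2) => i j le_ij _ _.
  by rewrite conley_rank.
- rewrite (eq_pers_diagram _ (fun i => esym (f_compatible_fval_eq e_compat e'_compat i))).
  apply: (perm_pers_diagram fe_mono (simplicial_homology_increasing _ _ _ _)
    (simplicial_homology_increasing _ _ _ _) dec2 dec3) => i j _ i_last j_last.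
  by rewrite /sq_rank /= !(filt_subcomplex_last_of_level e_compat e'_compat) //.
- apply: (perm_pers_diagram fe'_mono (simplicial_homology_increasing _ _ _ _)
    (fc_homology_increasing _ _ _) dec3 dec4) => i j le_ij _ _.
  by rewrite conley_rank.
Qed.
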